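(* Let $t$ be an $\mathrm{SL}_2$-tiling with $t_{jp}=1$. (i) If $t_{xy}=1$ for some $(x,y)$ with $x<j,\ y>p$, then either $t_{xp}=1$ for some $x<j$, or $t_{jy}=1$ for some $y>p$, but not both. (ii) If $t_{xy}=1$ for some $(x,y)$ with $x>j,\ y<p$, then either $t_{xp}=1$ for some $x>j$, or $t_{jy}=1$ for some $y<p$, but not both.
   Context: An $\mathrm{SL}_2$-tiling is a map $t:\mathbb{Z}\times\mathbb{Z}\to\{1,2,3,\dots\}$, $(i,j)\mapsto t_{ij}$, with $t_{ij}t_{i+1,j+1}-t_{i,j+1}t_{i+1,j}=1$ for all $i,j$. *)

From Stdlib Require Import ZArith.
Open Scope Z_scope.

(* An SL2-tiling: a map Z x Z -> {1,2,3,...} with every adjacent 2x2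
   determinant equal to 1.  We model values in Z with positivity. *)
Definition SL2_tiling (t : Z -> Z -> Z) : Prop :=
  (forall i j, 1 <= t i j) /\
  (forall i j, t i j * t (i+1) (j+1) - t i (j+1) * t (i+1) j = 1).

From Stdlib Require Import ZArith Lia Classical.
Open Scope Z_scope.

(* Fix an SL2-tiling t with t j p = 1.  For rows i and columns m put
     r(i) = t i p * t j (p+1) - t i (p+1) * t j p   (row_minor: rows i, j),
     s(m) = t j p * t (j+1) m - t j m * t (j+1) p   (col_minor: columns p, m).
   1. A function of "rank two" shape A i * B m - C i * D m satisfies the SL2
      diamond rule as soon as (A, C) and (B, D) are unimodular sequences;
      since the diamond rule determines a positive tiling from its values on
      one row and one column, t x y = t x p * t j y - r x * s y on the whole
      quadrant x <= j, p <= y.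
   2. The pairs (t . p, r) and (t j ., s) are "frieze pairs" (unimodular
      sequences starting at (1, 0)); hence r x >= 1 for x < j and s y >= 1
      for y > p, and if the column above (resp. the row to the right of)
      the entry t j p contains no further 1, then r x < t x p (resp. s y < t j y).
   3. Part (i) follows from the quadrant formula: two 1's at (x, p) and (j, y)
      would force t x y <= 0, and no 1 at all would force t x y >= 3.
      Part (ii) is part (i) for the tiling reflected through the origin. *)

Definition unimodular (g : Z -> Z -> Z) : Prop :=
  forall i m, g i m * g (i+1) (m+1) - g i (m+1) * g (i+1) m = 1.

Lemma Z_ind_from (P : Z -> Prop) (p : Z) :
  P p -> (forall k, p <= k -> P k -> P (k+1)) -> forall k, p <= k -> P k.
Proof.
  intros Hbase Hstep. apply Z.le_ind; [intros x y ->; reflexivity | exact Hbase | exact Hstep].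
Qed.

(* Cauchy-Binet for 2x2 minors: the product of a two-column and a two-row
   matrix whose consecutive 2x2 minors are all 1 satisfies the diamond rule. *)
Lemma rank_two_unimodular (A C B D : Z -> Z) :
  (forall i, C i * A (i+1) - A i * C (i+1) = 1) ->
  (forall m, B m * D (m+1) - B (m+1) * D m = 1) ->
  unimodular (fun i m => A i * B m - C i * D m).
Proof.
  intros HAC HBD i m.
  transitivity ((C i * A (i+1) - A i * C (i+1)) * (B m * D (m+1) - B (m+1) * D m)).
  - ring.
  - rewrite HAC, HBD. ring.
Qed.

Lemma unimodular_rigid (g h : Z -> Z -> Z) (j p : Z) :
  unimodular g -> unimodular h -> (forall i m, g i m <> 0) ->
  (forall i, i <= j -> g i p = h i p) -> (forall m, p <= m -> g j m = h j m) ->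
  forall i m, i <= j -> p <= m -> g i m = h i m.
Proof.
  intros Hg Hh Hnz Hcol Hrow.
  assert (Hbound : forall n i m, i <= j -> p <= m ->
            (j - i) + (m - p) <= Z.of_nat n -> g i m = h i m).
  { induction n as [|n IH]; intros i m Hi Hm Hd.
    - assert (i = j) as -> by lia. apply Hrow. lia.
    - destruct (Z.eq_dec i j) as [-> | Hij]; [apply Hrow; lia|].
      destruct (Z.eq_dec m p) as [-> | Hmp]; [apply Hcol; lia|].
      pose proof (Hg i (m-1)) as Dg. pose proof (Hh i (m-1)) as Dh.
      replace (m-1+1) with m in Dg, Dh by ring.
      rewrite <- (IH i (m-1)), <- (IH (i+1) m), <- (IH (i+1) (m-1)) in Dh by lia.
      apply (Z.mul_reg_r _ _ (g (i+1) (m-1))); [apply Hnz | lia]. }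
  intros i m Hi Hm. apply (Hbound (Z.to_nat ((j - i) + (m - p)))); lia.
Qed.

Section FriezePair.

Variables (a c : Z -> Z) (p : Z).
Hypothesis a_pos : forall k, 1 <= a k.
Hypothesis pair_det : forall k, a k * c (k+1) - a (k+1) * c k = 1.
Hypothesis a_base : a p = 1.
Hypothesis c_base : c p = 0.

Lemma frieze_pair_nonneg k : p <= k -> 0 <= c k.
Proof.
  revert k. apply (Z_ind_from (fun k => 0 <= c k)); [lia|].
  intros n _ IH. pose proof (pair_det n). pose proof (a_pos n). pose proof (a_pos (n+1)). nia.
Qed.

Lemma frieze_pair_ge1 k : p < k -> 1 <= c k.
Proof.
  intros Hk. pose proof (pair_det (k-1)) as D. replace (k-1+1) with k in D by ring.
  pose proof (frieze_pair_nonneg (k-1) ltac:(lia)).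
  pose proof (a_pos (k-1)). pose proof (a_pos k). nia.
Qed.

Lemma frieze_pair_lt :
  (forall k, p < k -> a k <> 1) -> forall k, p <= k -> c k < a k.
Proof.
  intros Hno. apply (Z_ind_from (fun k => c k < a k)); [lia|].
  intros n Hn IH. pose proof (pair_det n) as D. pose proof (a_pos n).
  assert (Ha : 2 <= a (n+1)) by (pose proof (a_pos (n+1)); pose proof (Hno (n+1) ltac:(lia)); lia).
  destruct (Z_lt_le_dec (c (n+1)) (a (n+1))) as [Hlt | Hge]; [exact Hlt | exfalso].
  (* Otherwise 1 = a n * c (n+1) - a (n+1) * c n >= a (n+1) * (a n - c n). *)
  assert (a (n+1) * (a n - c n) <= 1) by nia.
  nia.
Qed.

End FriezePair.

Section Quadrant.

Variables (t : Z -> Z -> Z) (j p : Z).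
Hypothesis t_pos : forall i m, 1 <= t i m.
Hypothesis t_det : unimodular t.
Hypothesis t_jp : t j p = 1.

Definition row_minor (i : Z) : Z := t i p * t j (p+1) - t i (p+1) * t j p.

Definition col_minor (m : Z) : Z := t j p * t (j+1) m - t j m * t (j+1) p.

Lemma row_minor_det i : row_minor i * t (i+1) p - t i p * row_minor (i+1) = 1.
Proof.
  unfold row_minor.
  transitivity (t j p * (t i p * t (i+1) (p+1) - t i (p+1) * t (i+1) p)); [ring|].
  rewrite t_det, t_jp. ring.
Qed.

Lemma col_minor_det m : t j m * col_minor (m+1) - t j (m+1) * col_minor m = 1.
Proof.
  unfold col_minor.
  transitivity (t j p * (t j m * t (j+1) (m+1) - t j (m+1) * t (j+1) m)); [ring|].
  rewrite t_det, t_jp. ring.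
Qed.

Lemma quadrant_formula x y :
  x <= j -> p <= y -> t x y = t x p * t j y - row_minor x * col_minor y.
Proof.
  apply (unimodular_rigid t (fun x y => t x p * t j y - row_minor x * col_minor y)).
  - exact t_det.
  - apply rank_two_unimodular; [exact row_minor_det | exact col_minor_det].
  - intros i m. pose proof (t_pos i m). lia.
  - intros i _. unfold col_minor. rewrite t_jp. ring.
  - intros m _. unfold row_minor. rewrite t_jp. ring.
Qed.

(* The column above (j, p), read upwards, forms a frieze pair with row_minor. *)
Lemma column_frieze_pair k :
  t (-k) p * row_minor (-(k+1)) - t (-(k+1)) p * row_minor (-k) = 1.
Proof.
  pose proof (row_minor_det (-(k+1))) as D.
  replace (-(k+1)+1) with (-k) in D by ring. lia.
Qed.

Lemma row_minor_ge1 x : x < j -> 1 <= row_minor x.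
Proof.
  intros Hx. replace x with (- - x) by ring.
  apply (frieze_pair_ge1 (fun k => t (-k) p) (fun k => row_minor (-k)) (-j));
    cbn beta; [intros; apply t_pos | exact column_frieze_pair | | lia].
  unfold row_minor. rewrite Z.opp_involutive. ring.
Qed.

Lemma row_minor_lt x :
  (forall i, i < j -> t i p <> 1) -> x <= j -> row_minor x < t x p.
Proof.
  intros Hno Hx. replace x with (- - x) by ring.
  apply (frieze_pair_lt (fun k => t (-k) p) (fun k => row_minor (-k)) (-j));
    cbn beta; [intros; apply t_pos | exact column_frieze_pair | | | | lia].
  - rewrite Z.opp_involutive. exact t_jp.
  - unfold row_minor. rewrite Z.opp_involutive. ring.
  - intros k Hk. apply Hno. lia.
Qed.

Lemma col_minor_ge1 y : p < y -> 1 <= col_minor y.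
Proof.
  apply (frieze_pair_ge1 (t j) col_minor p); [apply t_pos | exact col_minor_det |].
  unfold col_minor. ring.
Qed.

Lemma col_minor_lt y :
  (forall m, p < m -> t j m <> 1) -> p <= y -> col_minor y < t j y.
Proof.
  intros Hno. apply (frieze_pair_lt (t j) col_minor p);
    [apply t_pos | exact col_minor_det | exact t_jp | unfold col_minor; ring | exact Hno].
Qed.

Lemma unit_above_right :
  (exists x y, x < j /\ p < y /\ t x y = 1) ->
  ((exists x, x < j /\ t x p = 1) \/ (exists y, p < y /\ t j y = 1)) /\
  ~ ((exists x, x < j /\ t x p = 1) /\ (exists y, p < y /\ t j y = 1)).
Proof.
  intros [x [y [Hx [Hy Hxy]]]]. split.
  - apply NNPP. intros Hnone.
    assert (no_col : forall i, i < j -> t i p <> 1) by (intros i Hi E; apply Hnone; left; eauto).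
    assert (no_row : forall m, p < m -> t j m <> 1) by (intros m Hm E; apply Hnone; right; eauto).
    pose proof (row_minor_lt x no_col ltac:(lia)). pose proof (col_minor_lt y no_row ltac:(lia)).
    pose proof (row_minor_ge1 x Hx). pose proof (col_minor_ge1 y Hy).
    assert (F := quadrant_formula x y ltac:(lia) ltac:(lia)).
    (* With 1 <= row_minor x < t x p and 1 <= col_minor y < t j y the formula
       gives t x y >= t x p + t j y - 1 >= 3. *)
    rewrite Hxy in F. nia.
  - intros [[x' [Hx' Ex']] [y' [Hy' Ey']]].
    assert (F := quadrant_formula x' y' ltac:(lia) ltac:(lia)).
    (* Two further 1's would give t x' y' = 1 - row_minor x' * col_minor y' <= 0. *)
    rewrite Ex', Ey' in F.
    pose proof (row_minor_ge1 x' Hx'). pose proof (col_minor_ge1 y' Hy').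
    pose proof (t_pos x' y'). nia.
Qed.

End Quadrant.

Lemma unimodular_reflect (t : Z -> Z -> Z) :
  unimodular t -> unimodular (fun a b => t (-a) (-b)).
Proof.
  intros Hdet a b. pose proof (Hdet (-a-1) (-b-1)) as D.
  replace (-a-1+1) with (-a) in D by ring. replace (-b-1+1) with (-b) in D by ring.
  replace (-(a+1)) with (-a-1) by ring. replace (-(b+1)) with (-b-1) by ring. lia.
Qed.

(* Part (ii): part (i) for the reflected tiling. *)
Lemma unit_below_left (t : Z -> Z -> Z) (j p : Z) :
  (forall i m, 1 <= t i m) -> unimodular t -> t j p = 1 ->
  (exists x y, j < x /\ y < p /\ t x y = 1) ->
  ((exists x, j < x /\ t x p = 1) \/ (exists y, y < p /\ t j y = 1)) /\
  ~ ((exists x, j < x /\ t x p = 1) /\ (exists y, y < p /\ t j y = 1)).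
Proof.
  intros Hpos Hdet Hjp [x [y [Hx [Hy Hxy]]]].
  set (s := fun a b => t (-a) (-b)).
  assert (Hs : forall a b, s a b = t (-a) (-b)) by reflexivity.
  destruct (unit_above_right s (-j) (-p)) as [Hsome Hnot_both].
  - intros a b. apply Hpos.
  - apply unimodular_reflect, Hdet.
  - rewrite Hs, !Z.opp_involutive. exact Hjp.
  - exists (-x), (-y). rewrite Hs, !Z.opp_involutive. repeat split; [lia | lia | exact Hxy].
  - split.
    + destruct Hsome as [[a [Ha Ea]] | [b [Hb Eb]]]; rewrite Hs, Z.opp_involutive in *.
      * left. exists (-a). split; [lia | exact Ea].
      * right. exists (-b). split; [lia | exact Eb].
    + intros [[a [Ha Ea]] [b [Hb Eb]]]. apply Hnot_both. split.
      * exists (-a). rewrite Hs, !Z.opp_involutive. split; [lia | exact Ea].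
      * exists (-b). rewrite Hs, !Z.opp_involutive. split; [lia | exact Eb].
Qed.

Theorem proposition8p1 (t : Z -> Z -> Z) (j p : Z) :
  SL2_tiling t -> t j p = 1 ->
  ((exists x y, x < j /\ p < y /\ t x y = 1) ->
     ((exists x, x < j /\ t x p = 1) \/ (exists y, p < y /\ t j y = 1)) /\
     ~ ((exists x, x < j /\ t x p = 1) /\ (exists y, p < y /\ t j y = 1))) /\
  ((exists x y, j < x /\ y < p /\ t x y = 1) ->
     ((exists x, j < x /\ t x p = 1) \/ (exists y, y < p /\ t j y = 1)) /\
     ~ ((exists x, j < x /\ t x p = 1) /\ (exists y, y < p /\ t j y = 1))).
Proof.
  intros [Hpos Hdet] Hjp. split.
  - exact (unit_above_right t j p Hpos Hdet Hjp).
  - exact (unit_below_left t j p Hpos Hdet Hjp).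
Qed.
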